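(* Let $\Lambda$ be an integral lattice in an $n$-dimensional Euclidean space whose minimum $m$ is even. Let $x_0\in\Lambda$ with $N(x_0)=2m-2$, and let $\mathcal E=\{\pm y_1,\dots,\pm y_k\}$ be the set of all vectors $y\in\Lambda$ with $N(y)=2m+2$ and $y-x_0\in 2\Lambda$. Then the lines $\mathbb R y_1,\dots,\mathbb R y_k$ form an equiangular family of lines with common angle $\arccos\frac{1}{m+1}$ (equivalently $|y_i\cdot y_j|=2$ for all $i\neq j$), and the linear span of $\mathcal E$ has dimension at most $n-1$. (Families consisting of fewer than three lines are allowed.)
   Context: $N(x)=x\cdot x$ is the norm of $x$. A lattice $\Lambda$ is integral if $x\cdot y\in\mathbb Z$ for all $x,y\in\Lambda$. The minimum of $\Lambda$ is the smallest norm of a nonzero vector of $\Lambda$. A family of lines is equiangular with common angle $\theta$ if any two distinct lines in it make the angle $\theta$. *)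

From HB Require Import structures.
From mathcomp Require Import all_boot all_order all_algebra.
Set Implicit Arguments. Unset Strict Implicit. Unset Printing Implicit Defensive.
Import Order.TTheory GRing.Theory Num.Theory.
Local Open Scope ring_scope.

Definition dot (R : rcfType) (n : nat) (u v : 'rV[R]_n) : R := (u *m v^T) 0 0.
Definition normv (R : rcfType) (n : nat) (u : 'rV[R]_n) : R := dot u u.

(* The (full-rank) lattice with basis matrix B (rows = basis vectors). *)
Definition in_lattice (R : rcfType) (n : nat) (B : 'M[R]_n) (v : 'rV[R]_n) : Prop :=
  exists z : 'rV[int]_n, v = map_mx (fun k : int => k%:~R) z *m B.

Definition is_lattice_basis (R : rcfType) (n : nat) (B : 'M[R]_n) : Prop :=
  B \in unitmx.

Definition integral_lattice (R : rcfType) (n : nat) (B : 'M[R]_n) : Prop :=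
  forall x y, in_lattice B x -> in_lattice B y -> exists k : int, dot x y = k%:~R.

Definition lattice_minimum (R : rcfType) (n : nat) (B : 'M[R]_n) (m : R) : Prop :=
  (exists x, in_lattice B x /\ x != 0 /\ normv x = m) /\
  (forall x, in_lattice B x -> x != 0 -> m <= normv x).

Definition line_angle_cos (R : rcfType) (n : nat) (u v : 'rV[R]_n) : R :=
  `|dot u v| / (Num.sqrt (normv u) * Num.sqrt (normv v)).

(* Write y = x0 + 2w with w in the lattice.  Since N(x0) = 2m - 2 and N(y) = 2m + 2,
   we get x0.w + N(w) = 1, so N(x0 + w) = 2m - N(w); both w and x0 + w are nonzero
   lattice vectors, whence N(w) = m and x0.w = 1 - m.  Consequently y.x0 = 0, so all
   of E lies in the hyperplane orthogonal to x0 (which is nonzero as m <> 1).  For two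
   such vectors y, y' with halves w, w', minimality applied to w - w' and x0 + w + w'
   gives m - 2 <= 2 w.w' <= m, and y.y' = 2 + 2 (2 w.w' - m); integrality and the
   parity of m force 2 w.w' - m to be 0 or -2, that is y.y' = 2 or -2. *)
From HB Require Import structures.
From mathcomp Require Import all_boot all_order all_algebra.
From mathcomp Require Import ring lra zify.
Import Order.TTheory GRing.Theory Num.Theory.
Local Open Scope ring_scope.

Set Implicit Arguments. Unset Strict Implicit.

Section InnerProduct.
Variables (R : rcfType) (n : nat).
Implicit Types (u v w : 'rV[R]_n).

Lemma dotE u v : dot u v = \sum_i u 0 i * v 0 i.
Proof. by rewrite /dot !mxE; apply: eq_bigr => i _; rewrite mxE. Qed.

Lemma dotC u v : dot u v = dot v u.
Proof. by rewrite !dotE; apply: eq_bigr => i _; rewrite mulrC. Qed.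

Lemma dotDl u v w : dot (u + v) w = dot u w + dot v w.
Proof. by rewrite !dotE -big_split; apply: eq_bigr => i _; rewrite mxE mulrDl. Qed.

Lemma dotDr u v w : dot w (u + v) = dot w u + dot w v.
Proof. by rewrite !(dotC w) dotDl. Qed.

Lemma dotZl (a : R) u v : dot (a *: u) v = a * dot u v.
Proof. by rewrite !dotE mulr_sumr; apply: eq_bigr => i _; rewrite mxE mulrA. Qed.

Lemma dotZr (a : R) u v : dot v (a *: u) = a * dot v u.
Proof. by rewrite !(dotC v) dotZl. Qed.

Lemma dotNl u v : dot (- u) v = - dot u v.
Proof. by rewrite -scaleN1r dotZl mulN1r. Qed.

Lemma dotNr u v : dot v (- u) = - dot v u.
Proof. by rewrite !(dotC v) dotNl. Qed.

Lemma dot0r u : dot u 0 = 0.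
Proof. by rewrite dotE big1 // => i _; rewrite mxE mulr0. Qed.

Lemma dot_neq0r u v : dot u v != 0 -> v != 0.
Proof. by apply: contraNneq => ->; rewrite dot0r. Qed.

Lemma line_angle_cos_eqnorm u v (c : R) :
  0 <= c -> normv u = c -> normv v = c -> line_angle_cos u v = `|dot u v| / c.
Proof. by move=> c_ge0 Nu Nv; rewrite /line_angle_cos Nu Nv -expr2 sqr_sqrtr. Qed.

Lemma orthogonal_hyperplane u : normv u != 0 ->
  exists U : {vspace 'rV[R]_n},
    (\dim U <= n.-1)%N /\ forall v, dot v u = 0 -> v \in U.
Proof.
move=> Nu_neq0; pose f : 'Hom('rV[R]_n, 'M[R]_1) := linfun (mulmxr u^T).
exists (lker f); split.
  have rank_nullity := limg_ker_dim f fullv.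
  rewrite capfv dimvf dim_matrix mul1r in rank_nullity.
  have : (0 < \dim (f @: fullv))%N.
    rewrite lt0n dimv_eq0; apply/eqP => img0.
    have : f u \in (f @: fullv)%VS by rewrite memv_img ?memvf.
    rewrite img0 memv0 lfunE /= => /eqP/matrixP/(_ 0 0).
    by move=> uu0; move: Nu_neq0; rewrite /normv /dot uu0 mxE eqxx.
  by move: (\dim (lker f)) (\dim (limg f)) rank_nullity => a b; lia.
move=> v vu0; rewrite memv_ker lfunE /=.
by apply/eqP/matrixP => i j; rewrite !ord1 -[(v *m u^T) 0 0]/(dot v u) vu0 mxE.
Qed.

End InnerProduct.

Section LatticeClosure.
Variables (R : rcfType) (n : nat) (B : 'M[R]_n).
Implicit Types (u v : 'rV[R]_n).

Lemma in_latticeD u v : in_lattice B u -> in_lattice B v -> in_lattice B (u + v).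
Proof.
move=> [z1 ->] [z2 ->]; exists (z1 + z2); rewrite -mulmxDl; congr (_ *m _).
by apply/matrixP => i j; rewrite !mxE rmorphD.
Qed.

Lemma in_latticeN u : in_lattice B u -> in_lattice B (- u).
Proof.
move=> [z ->]; exists (- z); rewrite -mulNmx; congr (_ *m _).
by apply/matrixP => i j; rewrite !mxE rmorphN.
Qed.

End LatticeClosure.

Section HalfVectors.
Variables (R : rcfType) (n : nat) (B : 'M[R]_n) (m : R) (x0 : 'rV[R]_n).
Hypothesis minB : forall x, in_lattice B x -> x != 0 -> m <= normv x.
Hypothesis x0B : in_lattice B x0.
Hypothesis Nx0 : normv x0 = 2 * m - 2.

Definition half_vector (w : 'rV[R]_n) :=
  [/\ in_lattice B w, normv w = m & dot x0 w = 1 - m].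

Lemma half_vectorP w : in_lattice B w -> normv (x0 + 2 *: w) = 2 * m + 2 ->
  half_vector w.
Proof.
move=> wB; rewrite /normv !(dotDl, dotDr, dotZl, dotZr) (dotC w x0) -/(normv x0) Nx0.
move=> Ny; have x0w_Nw : dot x0 w + dot w w = 1 by lra.
have w_neq0 : w != 0 by apply: (@dot_neq0r _ _ (x0 + w)); rewrite dotDl x0w_Nw oner_neq0.
have x0w_neq0 : x0 + w != 0.
  by apply: (@dot_neq0r _ _ w); rewrite dotDr (dotC w x0) x0w_Nw oner_neq0.
have := minB wB w_neq0; have := minB (in_latticeD x0B wB) x0w_neq0.
rewrite /normv !(dotDl, dotDr) (dotC w x0) -/(normv x0) Nx0 => ??.
by split => //; rewrite /normv; lra.
Qed.

Lemma half_vector_orthogonal w : half_vector w -> dot (x0 + 2 *: w) x0 = 0.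
Proof.
by case=> _ _ x0w; rewrite dotDl dotZl (dotC w x0) x0w -/(normv x0) Nx0; ring.
Qed.

Lemma half_vector_dot w w' : half_vector w -> half_vector w' ->
  dot (x0 + 2 *: w) (x0 + 2 *: w') = 2 + 2 * (2 * dot w w' - m).
Proof.
case=> _ _ x0w [_ _ x0w'].
rewrite !(dotDl, dotDr, dotZl, dotZr) (dotC w x0) x0w x0w' -/(normv x0) Nx0; ring.
Qed.

Lemma half_vector_dot_window w w' : half_vector w -> half_vector w' ->
  w != w' -> x0 + w + w' != 0 -> m - 2 <= 2 * dot w w' <= m.
Proof.
move=> [wB Nw x0w] [w'B Nw' x0w'] neq_ww' sum_neq0.
have := minB (in_latticeD wB (in_latticeN w'B)); rewrite subr_eq0 => /(_ neq_ww').
have := minB (in_latticeD (in_latticeD x0B wB) w'B) sum_neq0.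
rewrite /normv !(dotDl, dotDr, dotNl, dotNr) (dotC w x0) (dotC w' x0) (dotC w' w).
rewrite -!/(normv _) Nx0 Nw Nw' x0w x0w' => ??.
by apply/andP; split; lra.
Qed.

End HalfVectors.

Lemma even_window (m : nat) (k : int) : ~~ odd m ->
  m%:Z - 2 <= 2 * k <= m%:Z -> 2 * k - m%:Z = 0 \/ 2 * k - m%:Z = - 2.
Proof. by move=> m_even /andP[]; lia. Qed.

Section EvenMinimum.
Variables (R : rcfType) (n : nat) (B : 'M[R]_n) (m : nat) (x0 : 'rV[R]_n).
Hypothesis intB : integral_lattice B.
Hypothesis m_even : ~~ odd m.
Hypothesis minB : forall x, in_lattice B x -> x != 0 -> m%:R <= normv x.
Hypothesis x0B : in_lattice B x0.
Hypothesis Nx0 : normv x0 = 2 * m%:R - 2.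

Lemma half_vector_dot_norm w w' :
  half_vector B m%:R x0 w -> half_vector B m%:R x0 w' ->
  w != w' -> x0 + w + w' != 0 -> `|dot (x0 + 2 *: w) (x0 + 2 *: w')| = 2.
Proof.
move=> hw hw' neq_ww' sum_neq0; have [[wB _ _] [w'B _ _]] := (hw, hw').
have [k wk] := intB wB w'B.
have /andP[lo hi] := half_vector_dot_window minB x0B Nx0 hw hw' neq_ww' sum_neq0.
have window : m%:Z - 2 <= 2 * k <= m%:Z.
  by rewrite -!(ler_int R) !(rmorphB, rmorphM) /= -wk; apply/andP.
rewrite (half_vector_dot Nx0 hw hw') wk.
have -> : 2 + 2 * (2 * (k%:~R : R) - m%:R) = (2 + 2 * (2 * k - m%:Z))%:~R.
  by rewrite rmorphD rmorphM rmorphB rmorphM.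
by rewrite -intr_norm; case: (even_window m_even window) => ->.
Qed.

End EvenMinimum.

Theorem theorem1p3 (R : rcfType) (n : nat) (B : 'M[R]_n) (m : nat)
    (hB : is_lattice_basis B) (hint : integral_lattice B)
    (hmin : lattice_minimum B m%:R) (heven : ~~ odd m)
    (x0 : 'rV[R]_n) (hx0 : in_lattice B x0) (hNx0 : normv x0 = (2 * m)%:R - 2) :
  let E := fun y : 'rV[R]_n =>
    [/\ in_lattice B y, normv y = (2 * m + 2)%:R &
        exists w, in_lattice B w /\ y - x0 = 2 *: w] in
  (forall y y', E y -> E y' -> y' != y -> y' != - y ->
     line_angle_cos y y' = 1 / (m + 1)%:R /\ `|dot y y'| = 2) /\
  (exists U : {vspace 'rV[R]_n}, (\dim U <= n.-1)%N /\ forall y, E y -> y \in U).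
Proof.
move=> E; have minB := hmin.2; rewrite natrM in hNx0.
have halfE y : E y -> exists2 w, half_vector B m%:R x0 w & y = x0 + 2 *: w.
  case=> _ Ny [w [wB yw]]; have ey : y = x0 + 2 *: w by rewrite -yw addrC subrK.
  by exists w => //; apply: half_vectorP; rewrite // -ey Ny natrD natrM.
split=> [y y' hy hy' neq_y'y neq_y'Ny|].
  have [[w hw ey] [w' hw' ey']] := (halfE y hy, halfE y' hy').
  have neq_ww' : w != w' by apply: contra_neq neq_y'y; rewrite ey ey' => ->.
  have sum_neq0 : x0 + w + w' != 0.
    apply: contra_neq neq_y'Ny => /eqP; rewrite addrC addr_eq0 => /eqP w'E.
    by rewrite ey ey' w'E scalerN scalerDr (scaler_nat 2 x0) mulr2n -addrA opprD addNKr.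
  have yy' : `|dot y y'| = 2.
    by rewrite ey ey' (half_vector_dot_norm hint heven minB hx0 hNx0 hw hw').
  split=> //; have [[_ Ny _] [_ Ny' _]] := (hy, hy').
  rewrite (line_angle_cos_eqnorm (ler0n _ _) Ny Ny') yy' -[(2 * m + 2)%N]mulnSr natrM.
  by rewrite invfM mulrA divff ?mul1r ?addn1 // pnatr_eq0.
have Nx0_neq0 : normv x0 != 0.
  by rewrite hNx0 subr_eq0 -natrM eqr_nat; apply: contraNneq heven => /eqP; lia.
have [U [dimU x0_perpU]] := orthogonal_hyperplane Nx0_neq0.
exists U; split=> // y /halfE[w hw ->]; apply: x0_perpU.
exact (half_vector_orthogonal hNx0 hw).
Qed.
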